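(* Let $\mathcal{F}\subset\mathbb{R}^d$ be a convex feasible set with bounded diameter $D_\infty$, i.e. $\|x-y\|_\infty\le D_\infty$ for all $x,y\in\mathcal{F}$. Let $f_1,\dots,f_T:\mathbb{R}^d\to\mathbb{R}$ be convex differentiable functions, and let $\theta^*\in\arg\min_{\theta\in\mathcal{F}}\sum_{t=1}^T f_t(\theta)$. Consider the AdaBelief iteration (without bias correction): starting from $\theta_1\in\mathcal{F}$, $m_0=0$, $s_0=0$, for $t=1,\dots,T$, $$g_t=\nabla f_t(\theta_t),\quad m_t=\beta_{1t}m_{t-1}+(1-\beta_{1t})g_t,\quad s_t=\beta_2 s_{t-1}+(1-\beta_2)(g_t-m_t)^2,$$ $$\theta_{t+1}=\Pi_{\mathcal{F},\sqrt{s_t}}\big(\theta_t-\alpha_t s_t^{-1/2}m_t\big),$$ with elementwise operations, $\Pi_{\mathcal{F},M}(y)=\arg\min_{x\in\mathcal{F}}\|M^{1/2}(x-y)\|$, and any small constant $\epsilon$ absorbed into $s_t$. Assume $0\le\beta_2<1$, $0\le\beta_1<1$, $\alpha_t=\alpha/\sqrt{t}$ with $\alpha>0$, $\beta_{1t}=\beta_1\lambda^t$ with $0<\lambda<1$, and $s_t\le s_{t+1}$ (elementwise) for all $t\in[T]$. Assume $\|g_t\|_\infty\le G_\infty/2$ (hence $\|g_t-m_t\|_\infty\le G_\infty$) and $s_{t,i}\ge c>0$ for all $t\in[T]$, $i\in[d]$. Then $$\sum_{t=1}^T[f_t(\theta_t)-f_t(\theta^* )]\le \frac{D_\infty^2\sqrt{T}}{2\alpha(1-\beta_1)}\sum_{i=1}^d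 s_{T,i}^{1/2}+\frac{(1+\beta_1)\alpha\sqrt{1+\log T}}{2\sqrt{c}(1-\beta_1)^3}\sum_{i=1}^d\big\|g_{1:T,i}^2\big\|_2+\frac{D_\infty^2\beta_1G_\infty}{2(1-\beta_1)(1-\lambda)^2\alpha}.$$
   Context: $g_{t,i}$ and $s_{t,i}$ denote the $i$-th coordinates of $g_t$ and $s_t$; $g_{1:T,i}^2$ denotes the vector $(g_{1,i}^2,\dots,g_{T,i}^2)\in\mathbb{R}^T$, and $\|\cdot\|_2$ is the Euclidean norm. *)

From HB Require Import structures.
From mathcomp Require Import all_boot all_order all_algebra.
From mathcomp Require Import all_classical all_reals all_analysis.
Set Implicit Arguments. Unset Strict Implicit. Unset Printing Implicit Defensive.
Import Order.TTheory GRing.Theory Num.Theory.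
Import numFieldNormedType.Exports.
Local Open Scope classical_set_scope.
Local Open Scope ring_scope.

Section Defs.
Variables (R : realType) (d : nat).
Local Notation V := 'rV[R]_d.

Definition basis_vec (i : 'I_d) : V := delta_mx ord0 i.

Definition grad (f : V -> R) (x : V) : V := \row_i ('D_(basis_vec i) f x).

Definition linf (v : V) : R := \big[Num.max/0]_(i < d) `|v ord0 i|.

Definition sqv (v : V) : V := map_mx (fun a => a ^+ 2) v.

Definition wnorm (w v : V) : R :=
  Num.sqrt (\sum_(i < d) Num.sqrt (w ord0 i) * (v ord0 i) ^+ 2).

Definition invsqrt_mul (s m : V) : V := \row_i (m ord0 i / Num.sqrt (s ord0 i)).

Definition convex_fun (f : V -> R) : Prop :=
  forall x y a, 0 <= a <= 1 -> f (a *: x + (1 - a) *: y) <= a * f x + (1 - a) * f y.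

End Defs.

From HB Require Import structures.
From mathcomp Require Import all_boot all_order all_algebra.
From mathcomp Require Import all_classical all_reals all_analysis.
From mathcomp Require Import ring lra.
Import Order.TTheory GRing.Theory Num.Theory.
Import numFieldNormedType.Exports.
Local Open Scope classical_set_scope.
Local Open Scope ring_scope.

Set Implicit Arguments.
Unset Strict Implicit.
Unset Printing Implicit Defensive.

(** By convexity the regret is at most [\sum_t <g_t, θ_t - θ*>], and solving the
   momentum recursion for [g_t] turns each term into
   [(1 + k_t) <m_t, θ_t - θ*> - k_t <m_{t-1}, θ_t - θ*>] with [k_t = β_1t / (1 - β_1t)].
   The variational inequality of the weighted projection bounds [<m_t, θ_t - θ*>] by
   [(|θ_t - θ*|^2 - |θ_{t+1} - θ*|^2) / (2 α_t) + α_t |m_t|^2 / 2] (norms weighted by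
   [√s_t] and [1/√s_t]) and [<m_{t-1}, θ_t - θ*>] from below by
   [<m_{t-1}, θ_{t-1} - θ*> - α_{t-1} |m_{t-1}|^2].  As [k_t] decreases, summation by parts
   telescopes the distance terms, which the monotonicity of [√t √s_t] and the diameter
   bound control; the momentum terms are at most [(1 - β_1)^-1] times the same sums for
   the gradients, and Cauchy-Schwarz with [\sum_t 1/t <= 1 + ln T] finishes.  The bound
   obtained has constant [(1 + 2 β_1) / (2 (1 - β_1)^2) <= (1 + β_1) / (2 (1 - β_1)^3)]
   and no third term. *)

(** * Convexity and the weighted projection *)

Lemma convex_derive_le (R : realType) (V : normedModType R) (f : V -> R) (x y : V) :
  convex_function setT f -> derivable f x (y - x) -> 'D_(y - x) f x <= f y - f x.
Proof.
move=> f_convex f_der.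
rewrite /derive cvg_at_rightE //.
apply: limr_le; first exact: (cvgP _ (cvg_dnbhs_at_right f_der)).
near=> h.
have h_gt0 : 0 < h by near: h; exact: nbhs_right_gt.
have h_lt1 : h < 1 by near: h; exact: nbhs_right_lt.
have := f_convex (Itv01 (ltW h_gt0) (ltW h_lt1)) y x; rewrite !inE => /(_ I I).
rewrite convRE -[conv _ _ _]/(h *: y + (1 - h) *: x) -[_ * f x]/((1 - h) * f x) /=.
have -> : h *: y + (1 - h) *: x = h *: (y - x) + x.
  by rewrite scalerBr scalerBl scale1r addrCA addrC.
rewrite /= -[h^-1 *: _]/(h^-1 * _) ler_pdivrMl //; lra.
Unshelve. all: by end_near.
Qed.

Lemma grad_derive (R : realType) (d : nat) (f : 'rV[R]_d -> R) (x v : 'rV[R]_d) :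
  differentiable f x -> 'D_v f x = \sum_(i < d) grad f x ord0 i * v ord0 i.
Proof.
move=> f_diff; rewrite deriveE // {1}[v]row_sum_delta linear_sum /=.
by apply: eq_bigr => i _; rewrite linearZ /= -deriveE // /grad !mxE mulrC.
Qed.

Lemma ge0_of_quadratic_ge0 (R : realFieldType) (A B : R) : 0 <= B ->
  (forall t, 0 < t < 1 -> 0 <= 2 * t * A + t ^+ 2 * B) -> 0 <= A.
Proof.
move=> B_ge0 quad_ge0; rewrite leNgt; apply/negP => A_lt0.
have den_gt0 : 0 < B - 2 * A by lra.
(* at [t = -A / (B - 2A)] the quadratic is negative *)
set t := - A / (B - 2 * A).
have t_gt0 : 0 < t by rewrite divr_gt0 //; lra.
have t_lt1 : t < 1 by rewrite ltr_pdivrMr // mul1r; lra.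
have := quad_ge0 t; rewrite t_gt0 t_lt1 => /(_ isT).
have -> : 2 * t * A + t ^+ 2 * B = t * (A * (B - 4 * A) / (B - 2 * A)).
  by rewrite /t; field; lra.
rewrite pmulr_rge0 // pmulr_lge0 ?invr_gt0 //; nra.
Qed.

Lemma wnorm_proj_vi (R : realType) (d : nat) (F : set 'rV[R]_d) (s y p z : 'rV[R]_d) :
  convex_set F -> F p -> (forall x, F x -> wnorm s (p - y) <= wnorm s (x - y)) -> F z ->
  0 <= \sum_(i < d) Num.sqrt (s ord0 i) * (p - y) ord0 i * (z - p) ord0 i.
Proof.
move=> F_convex Fp p_min Fz.
pose wsq (v : 'rV[R]_d) := \sum_(i < d) Num.sqrt (s ord0 i) * v ord0 i ^+ 2.
have wsq_ge0 (v : 'rV[R]_d) : 0 <= wsq v by apply: sumr_ge0 => i _; rewrite mulr_ge0 ?sqr_ge0.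
apply: (ge0_of_quadratic_ge0 (wsq_ge0 (z - p))) => t /andP[t_gt0 t_lt1].
have F_conv : F (t *: z + (1 - t) *: p).
  by have := F_convex z p (Itv01 (ltW t_gt0) (ltW t_lt1)); rewrite !inE; apply.
have expand : wsq (t *: z + (1 - t) *: p - y)
    = wsq (p - y) + 2 * t * \sum_(i < d) Num.sqrt (s ord0 i) * (p - y) ord0 i * (z - p) ord0 i
      + t ^+ 2 * wsq (z - p).
  rewrite /wsq !mulr_sumr -!big_split /=; apply: eq_bigr => i _; rewrite !mxE; ring.
have := p_min _ F_conv.
rewrite /wnorm ler_sqrt ?wsq_ge0 // -/(wsq (p - y)) -/(wsq (t *: z + (1 - t) *: p - y)) expand.
lra.
Qed.

Lemma vi_wsum_sqr_le (R : realFieldType) (n : nat) (w e f : 'I_n -> R) :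
  (forall i, 0 <= w i) -> 0 <= \sum_(i < n) w i * (e i - f i) * (- e i) ->
  \sum_(i < n) w i * e i ^+ 2 <= \sum_(i < n) w i * f i ^+ 2.
Proof.
move=> w_ge0 vi; rewrite -subr_ge0.
have -> : \sum_(i < n) w i * f i ^+ 2 - \sum_(i < n) w i * e i ^+ 2
    = \sum_(i < n) w i * (f i - e i) ^+ 2 + 2 * \sum_(i < n) w i * (e i - f i) * (- e i).
  by rewrite mulr_sumr -sumrB -big_split; apply: eq_bigr => i _ /=; ring.
by rewrite addr_ge0 ?mulr_ge0 // sumr_ge0 // => i _; rewrite mulr_ge0 ?sqr_ge0.
Qed.

Lemma vi_wsum_mul_ge (R : realFieldType) (n : nat) (w m e : 'I_n -> R) (a : R) :
  (forall i, 0 < w i) -> 0 < a ->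
  0 <= \sum_(i < n) w i * (e i + a * (m i / w i)) * (- e i) ->
  - (a * \sum_(i < n) m i ^+ 2 / w i) <= \sum_(i < n) m i * e i.
Proof.
move=> w_gt0 a_gt0 vi.
set S := \sum_(i < n) m i * e i.
set P := \sum_(i < n) m i ^+ 2 / w i.
set Q := \sum_(i < n) w i * e i ^+ 2.
have Q_le : Q <= - (a * S).
  suff vi_eq : \sum_(i < n) w i * (e i + a * (m i / w i)) * (- e i) = - Q - a * S.
    by rewrite vi_eq in vi; lra.
  rewrite /Q /S mulr_sumr -sumrN -sumrB; apply: eq_bigr => i _.
  by have := w_gt0 i => wi_gt0; field; lra.
(* AM-GM, coordinatewise: [- m e <= a m^2 / (2 w) + w e^2 / (2 a)] *)
have amgm : - S <= a * P / 2 + Q / (2 * a).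
  rewrite -subr_ge0.
  have -> : a * P / 2 + Q / (2 * a) - - S
      = \sum_(i < n) w i / (2 * a) * (a * m i / w i + e i) ^+ 2.
    rewrite /P /Q /S opprK mulr_sumr !mulr_suml -!big_split /=; apply: eq_bigr => i _.
    by have := w_gt0 i => wi_gt0; field; lra.
  apply: sumr_ge0 => i _; rewrite mulr_ge0 ?sqr_ge0 // divr_ge0 ?ltW //; lra.
have : Q / (2 * a) <= - S / 2.
  by rewrite ler_pdivrMr ?mulr_gt0 //; have -> : - S / 2 * (2 * a) = - (a * S) by field.
lra.
Qed.

Lemma sqr_convex_le (R : realDomainType) (b x y : R) : 0 <= b <= 1 ->
  (b * x + (1 - b) * y) ^+ 2 <= b * x ^+ 2 + (1 - b) * y ^+ 2.
Proof.
case/andP=> b_ge0 b_le1; rewrite -subr_ge0.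
have -> : b * x ^+ 2 + (1 - b) * y ^+ 2 - (b * x + (1 - b) * y) ^+ 2
    = b * (1 - b) * (x - y) ^+ 2 by ring.
by rewrite mulr_ge0 ?sqr_ge0 // mulr_ge0 // subr_ge0.
Qed.

Lemma odds_le (R : realFieldType) (x y : R) :
  0 <= x -> x <= y -> y < 1 -> x / (1 - x) <= y / (1 - y).
Proof.
move=> x_ge0 x_le_y y_lt1.
rewrite ler_pdivrMr ?subr_gt0 ?(le_lt_trans x_le_y) // mulrAC ler_pdivlMr ?subr_gt0 //.
nra.
Qed.

Lemma momentum_coef_le (R : realFieldType) (b : R) : 0 <= b < 1 ->
  (1 + 2 * b) / (2 * (1 - b) ^+ 2) <= (1 + b) / (2 * (1 - b) ^+ 3).
Proof.
case/andP=> b_ge0 b_lt1; have b1_gt0 : 0 < 1 - b by rewrite subr_gt0.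
rewrite -subr_ge0.
have -> : (1 + b) / (2 * (1 - b) ^+ 3) - (1 + 2 * b) / (2 * (1 - b) ^+ 2) = b ^+ 2 / (1 - b) ^+ 3.
  by field; rewrite gt_eqF.
by rewrite divr_ge0 ?sqr_ge0 ?exprn_ge0 ?ltW.
Qed.

Lemma sum_mul_le_sqrt (R : rcfType) (I : Type) (r : seq I) (x y : I -> R) :
  \sum_(i <- r) x i * y i <=
    Num.sqrt (\sum_(i <- r) x i ^+ 2) * Num.sqrt (\sum_(i <- r) y i ^+ 2).
Proof.
set X := \sum_(i <- r) x i ^+ 2; set Y := \sum_(i <- r) y i ^+ 2.
set S := \sum_(i <- r) x i * y i.
have X_ge0 : 0 <= X by apply: sumr_ge0 => i _; exact: sqr_ge0.
have sum_prod (a b : I -> R) : \sum_(i <- r) \sum_(j <- r) a i * b j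
    = (\sum_(i <- r) a i) * \sum_(j <- r) b j.
  by rewrite big_distrl; apply: eq_bigr => i _; rewrite big_distrr.
(* Lagrange's identity *)
have lagrange : \sum_(i <- r) \sum_(j <- r) (x i * y j - x j * y i) ^+ 2
    = 2 * (X * Y - S ^+ 2).
  transitivity (\sum_(i <- r) \sum_(j <- r) (x i ^+ 2 * y j ^+ 2)
      + \sum_(i <- r) \sum_(j <- r) (y i ^+ 2 * x j ^+ 2)
      - 2 * \sum_(i <- r) \sum_(j <- r) (x i * y i) * (x j * y j)).
    rewrite mulr_sumr -!big_split -sumrB; apply: eq_bigr => i _.
    rewrite mulr_sumr -!big_split -sumrB; apply: eq_bigr => j _ /=.
    by move: (x i) (y j) (x j) (y i) => a b c e; ring.
  by rewrite !sum_prod -/X -/Y -/S; ring.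
have S2_le : S ^+ 2 <= X * Y.
  have : 0 <= \sum_(i <- r) \sum_(j <- r) (x i * y j - x j * y i) ^+ 2.
    by apply: sumr_ge0 => i _; apply: sumr_ge0 => j _; exact: sqr_ge0.
  rewrite lagrange; lra.
rewrite -sqrtrM // (le_trans (ler_norm S)) // -sqrtr_sqr ler_sqrt //.
exact: le_trans (sqr_ge0 S) S2_le.
Qed.

Lemma inv_le_lnB (R : realType) (x : R) : 0 < x -> (x + 1)^-1 <= ln (x + 1) - ln x.
Proof.
move=> x_gt0.
have x1_gt0 : 0 < x + 1 by lra.
have /le_ln1Dx : -1 < - (x + 1)^-1 by rewrite ltrNl opprK invf_lt1 //; lra.
have -> : 1 - (x + 1)^-1 = x / (x + 1) by field; lra.
rewrite ln_div ?posrE //; lra.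
Qed.

Lemma sum_inv_le_1Dln (R : realType) (T : nat) : (0 < T)%N ->
  \sum_(1 <= t < T.+1) (t%:R : R)^-1 <= 1 + ln T%:R.
Proof.
case: T => // T _; elim: T => [|T IH]; first by rewrite big_nat1 invr1 ln1 addr0.
rewrite big_nat_recr //= -natr1.
have := @inv_le_lnB R T.+1%:R (ltr0Sn _ _); lra.
Qed.

Lemma sum_pred_le (R : numDomainType) (T : nat) (F : nat -> R) :
  F 0%N = 0 -> (forall t, 0 <= F t) ->
  \sum_(1 <= t < T.+1) F t.-1 <= \sum_(1 <= t < T.+1) F t.
Proof.
move=> F0 F_ge0; rewrite big_add1 /=.
case: T => [|T]; first by rewrite !big_geq.
by rewrite big_ltn // F0 add0r [leRHS]big_nat_recr //= lerDl.
Qed.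

Lemma ema_weighted_sum_le (R : realFieldType) (T : nat) (b : R) (M G rho : nat -> R) :
  0 <= b < 1 -> M 0%N = 0 -> (forall t, 0 <= M t) ->
  (forall t, 0 <= rho t) -> (forall t, (0 < t)%N -> rho t.+1 <= rho t) ->
  (forall t, (1 <= t <= T)%N -> M t <= b * M t.-1 + G t) ->
  \sum_(1 <= t < T.+1) rho t * M t <= (1 - b)^-1 * \sum_(1 <= t < T.+1) rho t * G t.
Proof.
case/andP=> b_ge0 b_lt1 M0 M_ge0 rho_ge0 rho_decr M_rec.
set S := \sum_(1 <= t < T.+1) rho t * M t.
have lag_le : \sum_(1 <= t < T.+1) rho t * M t.-1 <= S.
  apply: le_trans (@sum_pred_le _ T (fun t => rho t * M t) _ _); last first.
  - by move=> t; rewrite mulr_ge0.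
  - by rewrite M0 mulr0.
  apply: ler_sum_nat => -[|[|t]] //= _; first by rewrite M0 !mulr0.
  by apply: ler_wpM2r => //; exact: rho_decr.
have rec_le : S <= b * \sum_(1 <= t < T.+1) rho t * M t.-1
                   + \sum_(1 <= t < T.+1) rho t * G t.
  rewrite mulr_sumr -big_split; apply: ler_sum_nat => t t_range /=.
  by rewrite mulrCA -mulrDr; apply: ler_wpM2l => //; rewrite M_rec // -ltnS.
rewrite ler_pdivlMl ?subr_gt0 //; nra.
Qed.

Lemma weighted_telescope_le (R : realFieldType) (T : nat) (c X : nat -> R) (D : R) :
  (0 < T)%N ->
  (forall t, (1 <= t <= T)%N -> 0 <= c t) ->
  (forall t, (1 <= t < T)%N -> c t <= c t.+1) ->
  (forall t, (1 <= t <= T.+1)%N -> 0 <= X t <= D) ->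
  \sum_(1 <= t < T.+1) c t * (X t - X t.+1) <= c T * D.
Proof.
move=> T_gt0 c_ge0 c_incr X_range.
have partial n : (1 <= n <= T)%N ->
    \sum_(1 <= t < n.+1) c t * (X t - X t.+1) <= c n * (D - X n.+1).
  elim: n => [//|n IH] /andP[_ n_lt].
  rewrite big_nat_recr //=.
  case: n IH n_lt => [_ _|n IH n_lt].
    have /andP[_ X1_le] := X_range 1%N isT.
    by rewrite big_geq // add0r; apply: ler_wpM2l; rewrite ?c_ge0 ?T_gt0 // lerD2r.
  have c_le : c n.+1 <= c n.+2 by apply: c_incr.
  have /andP[X_ge0 X_le] : 0 <= X n.+2 <= D by apply: X_range; rewrite /= ltnW.
  have := IH (ltnW n_lt).
  have : c n.+1 * (D - X n.+2) <= c n.+2 * (D - X n.+2) by rewrite ler_wpM2r ?subr_ge0.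
  lra.
apply: le_trans (partial T _) _; first by rewrite T_gt0 leqnn.
have /andP[X_ge0 _] := X_range T.+1 (leqnn _).
apply: ler_wpM2l; first by apply: c_ge0; rewrite T_gt0 /=.
by rewrite lerBlDr lerDl.
Qed.

Lemma momentum_step_le (R : realFieldType) (E u u' v p p' q k k' K kmax : R) :
  E = (1 + k) * u - k * v -> u' - p' <= v -> u <= q + p / 2 -> q <= K ->
  0 <= k <= kmax -> 0 <= k - k' <= kmax -> 0 <= p -> 0 <= p' ->
  E <= (k' * u - k * u') + (q + (k - k') * K + (1 + kmax) / 2 * p + kmax * p').
Proof.
move=> -> v_ge u_le q_le /andP[k_ge0 k_le] /andP[dk_ge0 dk_le] p_ge0 p'_ge0.
have := ler_wpM2l k_ge0 v_ge.
have := ler_wpM2l (addr_ge0 ler01 dk_ge0) u_le.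
have := ler_wpM2l dk_ge0 q_le.
have := ler_wpM2r p_ge0 dk_le.
have := ler_wpM2r p'_ge0 k_le.
lra.
Qed.

Lemma sum_momentum_le (R : realFieldType) (T : nat) (E u v p q k : nat -> R) (K kmax : R) :
  (0 < T)%N ->
  (forall t, (1 <= t <= T)%N -> E t = (1 + k t) * u t - k t * v t) ->
  (forall t, (1 <= t <= T)%N -> u t.-1 - p t.-1 <= v t) ->
  (forall t, (1 <= t <= T)%N -> u t <= q t + p t / 2) ->
  (forall t, (1 <= t <= T)%N -> q t <= K) ->
  \sum_(1 <= t < T.+1) q t <= K -> 0 <= K ->
  (forall t, (1 <= t <= T)%N -> 0 <= k t <= kmax) ->
  (forall t, (1 <= t < T)%N -> k t.+1 <= k t) ->
  u 0%N = 0 -> p 0%N = 0 -> (forall t, 0 <= p t) ->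
  \sum_(1 <= t < T.+1) E t
    <= (1 + kmax) * K + ((1 + kmax) / 2 + kmax) * \sum_(1 <= t < T.+1) p t.
Proof.
move=> T_gt0 E_eq v_ge u_le q_le sum_q_le K_ge0 k_range k_decr u0 p0 p_ge0.
(* [k] truncated after [T], so that the telescoping below has no boundary term *)
pose k' t := if (t <= T)%N then k t else 0.
pose dk t := k' t - k' t.+1.
have step t : (1 <= t <= T)%N ->
    E t <= (k' t.+1 * u t - k' t * u t.-1)
           + (q t + dk t * K + (1 + kmax) / 2 * p t + kmax * p t.-1).
  move=> t_range; have /andP[t_ge1 t_le] := t_range.
  have /andP[_ k_le] := k_range t t_range.
  have k't : k' t = k t by rewrite /k' t_le.
  rewrite /dk k't; apply: momentum_step_le; rewrite ?E_eq ?v_ge ?u_le ?q_le ?k_range //.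
  rewrite /k'; case: ifP => t1_le; last by rewrite subr0; exact: k_range.
  have /andP[k1_ge0 _] := k_range t.+1 t1_le.
  have := k_decr t; rewrite t_ge1 t1_le => /(_ isT).
  by move=> k_decr_t; apply/andP; split; lra.
have sum_step : \sum_(1 <= t < T.+1) E t
    <= \sum_(1 <= t < T.+1) (k' t.+1 * u t - k' t * u t.-1)
       + (\sum_(1 <= t < T.+1) q t + (\sum_(1 <= t < T.+1) dk t) * K
          + (1 + kmax) / 2 * \sum_(1 <= t < T.+1) p t
          + kmax * \sum_(1 <= t < T.+1) p t.-1).
  rewrite mulr_suml !mulr_sumr -!big_split /=; apply: ler_sum_nat => t t_range.
  exact: step.
have k'T : k' T.+1 = 0 by rewrite /k' ltnn.
rewrite (telescope_sumr_eq (fun t => k' t * u t.-1)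
           (fun t => k' t.+1 * u t - k' t * u t.-1)) // k'T u0 mul0r mulr0 subr0 add0r in sum_step.
rewrite (telescope_sumr_eq (fun t => - k' t) dk) // in sum_step; last first.
  by move=> t _; rewrite /dk opprK addrC.
rewrite k'T oppr0 sub0r opprK in sum_step.
have /andP[k1_ge0 k1_le] : 0 <= k' 1%N <= kmax by rewrite /k' T_gt0; exact: k_range.
have := ler_wpM2r K_ge0 k1_le.
have := ler_wpM2l (le_trans k1_ge0 k1_le) (@sum_pred_le _ T p p0 p_ge0).
lra.
Qed.

(** * The AdaBelief iteration *)

Section AdaBelief.
Context {R : realType} {d T : nat} {F : set 'rV[R]_d} {Dinf alpha beta1 lambda c : R}.
Context {f : nat -> 'rV[R]_d -> R} {theta m s : nat -> 'rV[R]_d} {thetastar : 'rV[R]_d}.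

Hypothesis T_gt0 : (0 < T)%N.
Hypothesis F_convex : convex_set F.
Hypothesis F_diam : forall x y, F x -> F y -> linf (x - y) <= Dinf.
Hypothesis f_convex : forall t, (1 <= t <= T)%N ->
  convex_function setT (f t) /\ (forall x, differentiable (f t) x).
Hypothesis F_thetastar : F thetastar.
Hypotheses (beta1_ge0 : 0 <= beta1) (beta1_lt1 : beta1 < 1) (alpha_gt0 : 0 < alpha).
Hypotheses (lambda_ge0 : 0 <= lambda) (lambda_le1 : lambda <= 1).
Hypothesis F_theta1 : F (theta 1%N).
Hypothesis m0 : m 0%N = 0.
Hypothesis m_rec : forall t, (1 <= t <= T)%N ->
  m t = (beta1 * lambda ^+ t) *: m t.-1
        + (1 - beta1 * lambda ^+ t) *: grad (f t) (theta t).
Hypothesis theta_proj : forall t, (1 <= t <= T)%N ->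
  let y := theta t - (alpha / Num.sqrt t%:R) *: invsqrt_mul (s t) (m t) in
  F (theta t.+1) /\
  (forall x, F x -> wnorm (s t) (theta t.+1 - y) <= wnorm (s t) (x - y)).
Hypothesis s_incr : forall t, (1 <= t <= T)%N -> forall i, s t ord0 i <= s t.+1 ord0 i.
Hypothesis c_gt0 : 0 < c.
Hypothesis s_ge_c : forall t, (1 <= t <= T)%N -> forall i, c <= s t ord0 i.

Local Notation gr t := (grad (f t) (theta t)).
Local Notation wt t i := (Num.sqrt (s t ord0 i)).
Local Notation step t := (alpha / Num.sqrt t%:R).
Local Notation mom t := (beta1 * lambda ^+ t).
Local Notation dev t i := (theta t ord0 i - thetastar ord0 i).
Local Notation lin t := (\sum_(i < d) gr t ord0 i * dev t i).
Local Notation corr t := (\sum_(i < d) m t ord0 i * dev t i).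
Local Notation lagcorr t := (\sum_(i < d) m t.-1 ord0 i * dev t i).
Local Notation pen t := (step t * \sum_(i < d) m t ord0 i ^+ 2 / wt t i) (t in scope nat_scope).
Local Notation coef t i := (Num.sqrt t%:R / (2 * alpha) * wt t i).
Local Notation tel t := (\sum_(i < d) coef t i * (dev t i ^+ 2 - dev t.+1 i ^+ 2)).
Local Notation Kbound := (\sum_(i < d) coef T i * Dinf ^+ 2).
Local Notation kmax := (beta1 / (1 - beta1)).

Lemma sqrtc_le_wt t i : (1 <= t <= T)%N -> Num.sqrt c <= wt t i.
Proof. by move=> t_range; rewrite ler_sqrt ?s_ge_c // (le_trans (ltW c_gt0)) ?s_ge_c. Qed.

Lemma wt_gt0 t i : (1 <= t <= T)%N -> 0 < wt t i.
Proof. by move=> t_range; rewrite (lt_le_trans _ (sqrtc_le_wt i t_range)) ?sqrtr_gt0. Qed.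

Lemma wt_le t j i : (1 <= t)%N -> (t <= j <= T)%N -> wt t i <= wt j i.
Proof.
move=> t_ge1 /andP[t_le_j j_le]; have j_ge1 := leq_trans t_ge1 t_le_j.
rewrite ler_sqrt ?(le_trans (ltW c_gt0)) ?s_ge_c ?j_ge1 //.
pose D := [pred t | 1 <= t <= T]%N.
have s_mono : {in D &, {homo (fun t => s t ord0 i) : a b / (a <= b)%N >-> a <= b}}.
  apply: homo_leq_in => //; first exact: le_trans.
    move=> a b /andP[a_ge1 _] /andP[_ b_le] k /andP[a_lt k_lt].
    by rewrite inE (leq_trans a_ge1 (ltnW a_lt)) (leq_trans (ltnW k_lt) b_le).
  by move=> k k_range _; exact: s_incr.
by apply: s_mono; rewrite ?inE ?t_ge1 ?j_ge1 ?(leq_trans t_le_j j_le).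
Qed.

Lemma theta_in_F t : (1 <= t <= T.+1)%N -> F (theta t).
Proof.
case: t => [//|[_|t t_range]]; first exact: F_theta1.
by have [] := @theta_proj t.+1 t_range.
Qed.

Lemma dev_sqr_le t i : (1 <= t <= T.+1)%N -> dev t i ^+ 2 <= Dinf ^+ 2.
Proof.
move=> t_range.
have : `|dev t i| <= Dinf.
  apply: le_trans (F_diam (theta_in_F t_range) F_thetastar).
  have -> : dev t i = (theta t - thetastar) ord0 i by rewrite !mxE.
  exact: (le_bigmax 0 (fun j => `|(theta t - thetastar) ord0 j|)).
rewrite ler_norml => /andP[lb ub]; nra.
Qed.

Lemma regret_le_lin t : (1 <= t <= T)%N -> f t (theta t) - f t thetastar <= lin t.
Proof.
move=> t_range; have [f_cvx f_diff] := f_convex t_range.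
have := convex_derive_le f_cvx (diff_derivable (v := thetastar - theta t) (f_diff _)).
rewrite grad_derive //.
suff -> : \sum_(i < d) gr t ord0 i * (thetastar - theta t) ord0 i = - lin t by lra.
by rewrite -sumrN; apply: eq_bigr => i _; rewrite !mxE; ring.
Qed.

Lemma mom_range t : 0 <= mom t <= beta1.
Proof. by rewrite mulr_ge0 ?exprn_ge0 //= ler_piMr // exprn_ile1. Qed.

Lemma mom_decr t : mom t.+1 <= mom t.
Proof. by rewrite ler_wpM2l // exprS ler_piMl ?exprn_ge0. Qed.

Lemma lin_momentum t : (1 <= t <= T)%N ->
  lin t = (1 + mom t / (1 - mom t)) * corr t - mom t / (1 - mom t) * lagcorr t.
Proof.
move=> t_range; have /andP[_ mom_le] := mom_range t.
have mom_lt1 := le_lt_trans mom_le beta1_lt1.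
have -> : corr t = mom t * lagcorr t + (1 - mom t) * lin t.
  rewrite !mulr_sumr -big_split; apply: eq_bigr => i _ /=.
  by rewrite (m_rec t_range) !mxE; ring.
by field; lra.
Qed.

Lemma step_gt0 t : (0 < t)%N -> 0 < step t.
Proof. by move=> t_gt0; rewrite divr_gt0 // sqrtr_gt0 ltr0n. Qed.

Lemma corr_le t : (1 <= t <= T)%N -> corr t <= tel t + pen t / 2.
Proof.
move=> t_range; have [F_next proj_min] := theta_proj t_range.
have eta_gt0 : 0 < step t by case/andP: t_range => /step_gt0.
have wt_neq0 i : wt t i != 0 by rewrite gt_eqF ?wt_gt0.
have vi := wnorm_proj_vi F_convex F_next proj_min F_thetastar.
set eta := step t in eta_gt0 vi *.
rewrite (eq_bigr (fun i => wt t i * (dev t.+1 i - (dev t i - eta * (m t ord0 i / wt t i)))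
                           * - dev t.+1 i)) in vi; last by move=> i _; rewrite !mxE; ring.
have := vi_wsum_sqr_le (fun i => ltW (wt_gt0 i t_range)) vi.
set A := \sum_(i < d) wt t i * dev t i ^+ 2.
set B := \sum_(i < d) wt t i * dev t.+1 i ^+ 2.
set P := \sum_(i < d) m t ord0 i ^+ 2 / wt t i.
have -> : \sum_(i < d) wt t i * (dev t i - eta * (m t ord0 i / wt t i)) ^+ 2
    = A - 2 * eta * corr t + eta ^+ 2 * P.
  rewrite !mulr_sumr -sumrB -big_split; apply: eq_bigr => i _ /=.
  by field.
have -> : tel t = (A - B) / (2 * eta).
  rewrite /eta -sumrB mulr_suml; apply: eq_bigr => i _.
  by field; rewrite !gt_eqF // sqrtr_gt0 ltr0n; case/andP: t_range.
move=> B_le.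
have -> : (A - B) / (2 * eta) + eta * P / 2 = (A - B + eta ^+ 2 * P) / (2 * eta) by field; lra.
have two_eta_gt0 : 0 < 2 * eta by lra.
rewrite ler_pdivlMr //; lra.
Qed.

Lemma lagcorr_ge t : (1 <= t <= T)%N -> corr t.-1 - pen t.-1 <= lagcorr t.
Proof.
case: t => [//|[_|t t_range]].
  by rewrite m0 !big1 ?mulr0 ?subr0 // => i _; rewrite mxE ?expr2 !mul0r.
have t1_range : (1 <= t.+1 <= T)%N := ltnW t_range.
have [F_next proj_min] := theta_proj t1_range.
have vi := wnorm_proj_vi F_convex F_next proj_min (@theta_in_F t.+1 (leqW t1_range)).
have eta_gt0 := step_gt0 (ltn0Sn t).
set eta := step t.+1 in eta_gt0 vi *.
rewrite (eq_bigr (fun i => wt t.+1 i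
    * ((theta t.+2 ord0 i - theta t.+1 ord0 i) + eta * (m t.+1 ord0 i / wt t.+1 i))
    * - (theta t.+2 ord0 i - theta t.+1 ord0 i))) in vi; last by move=> i _; rewrite !mxE; ring.
have := vi_wsum_mul_ge (fun i => wt_gt0 i t1_range) eta_gt0 vi.
have -> : lagcorr t.+2
    = corr t.+1 + \sum_(i < d) m t.+1 ord0 i * (theta t.+2 ord0 i - theta t.+1 ord0 i).
  by rewrite -big_split; apply: eq_bigr => i _ /=; ring.
rewrite /=; lra.
Qed.

Lemma coef_ge0 t i : 0 <= coef t i.
Proof. by rewrite mulr_ge0 ?divr_ge0 ?sqrtr_ge0 // mulr_ge0 // ltW. Qed.

Lemma coef_le t j i : (1 <= t)%N -> (t <= j <= T)%N -> coef t i <= coef j i.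
Proof.
move=> t_ge1 tj_range; have /andP[t_le_j _] := tj_range.
apply: ler_pM; rewrite ?divr_ge0 ?sqrtr_ge0 ?mulr_ge0 ?(ltW alpha_gt0) ?wt_le //.
by rewrite ler_pM2r ?invr_gt0 ?mulr_gt0 // ler_sqrt ?ler_nat.
Qed.

Lemma tel_le t : (1 <= t <= T)%N -> tel t <= Kbound.
Proof.
move=> t_range; have /andP[t_ge1 t_le] := t_range.
apply: ler_sum => i _.
have dev_le : dev t i ^+ 2 <= Dinf ^+ 2 by apply: dev_sqr_le; rewrite t_ge1 leqW.
have dev1_ge0 := sqr_ge0 (dev t.+1 i).
apply: le_trans (_ : coef t i * Dinf ^+ 2 <= _).
  by apply: ler_wpM2l; [exact: coef_ge0 | lra].
by apply: ler_wpM2r; [exact: sqr_ge0 | apply: coef_le; rewrite ?t_le ?leqnn].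
Qed.

Lemma sum_tel_le : \sum_(1 <= t < T.+1) tel t <= Kbound.
Proof.
rewrite exchange_big; apply: ler_sum => i _.
apply: weighted_telescope_le => //.
- by move=> t _; exact: coef_ge0.
- by move=> t /andP[t_ge1 t_lt]; apply: coef_le; rewrite // leqnSn.
- by move=> t t_range; rewrite sqr_ge0 dev_sqr_le.
Qed.

Lemma Kbound_ge0 : 0 <= Kbound.
Proof. by apply: sumr_ge0 => i _; rewrite mulr_ge0 ?coef_ge0 ?sqr_ge0. Qed.

Lemma mom_sqr_le t i : (1 <= t <= T)%N ->
  m t ord0 i ^+ 2 <= beta1 * m t.-1 ord0 i ^+ 2 + gr t ord0 i ^+ 2.
Proof.
move=> t_range; rewrite (m_rec t_range) 3!mxE.
have /andP[mom_ge0 mom_le] := mom_range t.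
apply: le_trans (sqr_convex_le _ _ _) _.
  by rewrite mom_ge0 (le_trans mom_le (ltW beta1_lt1)).
have := ler_wpM2r (sqr_ge0 (m t.-1 ord0 i)) mom_le.
have := mulr_ge0 mom_ge0 (sqr_ge0 (gr t ord0 i)).
lra.
Qed.

Lemma pen_le t : (1 <= t <= T)%N ->
  pen t <= alpha / Num.sqrt c * \sum_(i < d) (Num.sqrt t%:R)^-1 * m t ord0 i ^+ 2.
Proof.
move=> t_range; rewrite !mulr_sumr; apply: ler_sum => i _.
set a := alpha * (Num.sqrt t%:R)^-1 * m t ord0 i ^+ 2.
have a_ge0 : 0 <= a by rewrite mulr_ge0 ?sqr_ge0 // divr_ge0 ?sqrtr_ge0 ?ltW.
rewrite (_ : _ * (_ / _) = a * (wt t i)^-1); last by rewrite /a; ring.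
rewrite (_ : _ * (_ * _) = a * (Num.sqrt c)^-1); last by rewrite /a; ring.
by rewrite ler_wpM2l // lef_pV2 ?posrE ?sqrtc_le_wt ?wt_gt0 ?sqrtr_gt0.
Qed.

Lemma sum_pen_le : \sum_(1 <= t < T.+1) pen t <=
  alpha / (Num.sqrt c * (1 - beta1)) * Num.sqrt (1 + ln T%:R)
    * \sum_(i < d) Num.sqrt (\sum_(1 <= t < T.+1) (gr t ord0 i ^+ 2) ^+ 2).
Proof.
pose rho t : R := (Num.sqrt t%:R)^-1.
have rho_ge0 t : 0 <= rho t by rewrite invr_ge0 sqrtr_ge0.
have rho_decr t : (0 < t)%N -> rho t.+1 <= rho t.
  by move=> t_gt0; rewrite lef_pV2 ?posrE ?sqrtr_gt0 ?ltr0n // ler_sqrt ?ler_nat.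
have sum_rho_sqr : \sum_(1 <= t < T.+1) rho t ^+ 2 <= 1 + ln T%:R.
  apply: le_trans (sum_inv_le_1Dln _ T_gt0); apply: ler_sum_nat => t /andP[t_gt0 _].
  by rewrite /rho exprVn sqr_sqrtr ?ler0n.
apply: le_trans; first by apply: ler_sum_nat => t; exact: pen_le.
rewrite -mulr_sumr exchange_big /=.
set L := 1 + ln T%:R.
rewrite [leRHS](_ : _ = alpha / Num.sqrt c * \sum_(i < d) ((1 - beta1)^-1
    * (Num.sqrt (\sum_(1 <= t < T.+1) (gr t ord0 i ^+ 2) ^+ 2) * Num.sqrt L))); last first.
  by rewrite !mulr_sumr invfM; apply: eq_bigr => i _; ring.
apply: ler_wpM2l; first by rewrite divr_ge0 ?sqrtr_ge0 ?ltW.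
apply: ler_sum => i _.
have beta1_range : 0 <= beta1 < 1 by rewrite beta1_ge0 beta1_lt1.
have m0_sqr : m 0%N ord0 i ^+ 2 = 0 by rewrite m0 mxE expr0n.
apply: le_trans (ema_weighted_sum_le beta1_range m0_sqr (fun t => sqr_ge0 _) rho_ge0 rho_decr
  (fun t t_range => @mom_sqr_le t i t_range)) _.
apply: ler_wpM2l; first by rewrite invr_ge0 subr_ge0 ltW.
apply: le_trans (sum_mul_le_sqrt _ _ _) _.
have L_ge0 : 0 <= L by rewrite addr_ge0 // ln_ge0 // ler1n.
by rewrite mulrC; apply: ler_wpM2l; rewrite ?sqrtr_ge0 // ler_sqrt.
Qed.

Lemma pen_ge0 t : 0 <= pen t.
Proof.
apply: mulr_ge0; first by rewrite divr_ge0 ?sqrtr_ge0 ?ltW.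
by apply: sumr_ge0 => i _; rewrite divr_ge0 ?sqr_ge0 ?sqrtr_ge0.
Qed.

Lemma sum_lin_le : \sum_(1 <= t < T.+1) lin t
  <= (1 + kmax) * Kbound + ((1 + kmax) / 2 + kmax) * \sum_(1 <= t < T.+1) pen t.
Proof.
have k_range t : (1 <= t <= T)%N -> 0 <= mom t / (1 - mom t) <= kmax.
  have /andP[mom_ge0 mom_le] := mom_range t.
  by move=> _; rewrite odds_le // andbT divr_ge0 // subr_ge0 (le_trans mom_le) ?ltW.
have k_decr t : (1 <= t < T)%N -> mom t.+1 / (1 - mom t.+1) <= mom t / (1 - mom t).
  have /andP[mom_ge0 _] := mom_range t.+1; have /andP[_ mom_le] := mom_range t.
  by move=> _; rewrite odds_le ?mom_decr // (le_lt_trans mom_le).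
have corr0 : corr 0 = 0 by rewrite m0 big1 // => i _; rewrite mxE mul0r.
have pen0 : pen 0 = 0 by rewrite m0 big1 ?mulr0 // => i _; rewrite mxE expr2 !mul0r.
exact: (sum_momentum_le (E := fun t => lin t) (u := fun t => corr t)
  (v := fun t => lagcorr t) (p := fun t => pen t) (q := fun t => tel t)
  (k := fun t => mom t / (1 - mom t)) T_gt0 lin_momentum lagcorr_ge corr_le
  tel_le sum_tel_le Kbound_ge0 k_range k_decr corr0 pen0 pen_ge0).
Qed.

Lemma adabelief_regret_le :
  \sum_(1 <= t < T.+1) (f t (theta t) - f t thetastar) <=
    Dinf ^+ 2 * Num.sqrt T%:R / (2 * alpha * (1 - beta1)) * \sum_(i < d) Num.sqrt (s T ord0 i)
  + (1 + 2 * beta1) / (2 * (1 - beta1) ^+ 2)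
      * (alpha * Num.sqrt (1 + ln T%:R) / Num.sqrt c
         * \sum_(i < d) Num.sqrt (\sum_(1 <= t < T.+1) (gr t ord0 i ^+ 2) ^+ 2)).
Proof.
apply: le_trans (_ : _ <= \sum_(1 <= t < T.+1) lin t) _.
  by apply: ler_sum_nat => t; exact: regret_le_lin.
apply: le_trans sum_lin_le _.
have kmax_ge0 : 0 <= kmax by rewrite divr_ge0 // subr_ge0 ltW.
have coef_ge0 : 0 <= (1 + kmax) / 2 + kmax by rewrite addr_ge0 // divr_ge0 // addr_ge0.
have := ler_wpM2l coef_ge0 sum_pen_le.
have beta1_neq1 : 1 - beta1 != 0 by rewrite gt_eqF // subr_gt0.
have sqrtc_neq0 : Num.sqrt c != 0 by rewrite gt_eqF // sqrtr_gt0.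
have alpha_neq0 : alpha != 0 by rewrite gt_eqF.
rewrite (_ : (1 + kmax) * Kbound = Dinf ^+ 2 * Num.sqrt T%:R / (2 * alpha * (1 - beta1))
                               * \sum_(i < d) Num.sqrt (s T ord0 i)); last first.
  by rewrite !mulr_sumr; apply: eq_bigr => i _; field; rewrite beta1_neq1 alpha_neq0.
rewrite (_ : (1 + 2 * beta1) / _ * _ = ((1 + kmax) / 2 + kmax)
   * (alpha / (Num.sqrt c * (1 - beta1)) * Num.sqrt (1 + ln T%:R)
      * \sum_(i < d) Num.sqrt (\sum_(1 <= t < T.+1) (gr t ord0 i ^+ 2) ^+ 2))); last first.
  by field; rewrite beta1_neq1 sqrtc_neq0.
lra.
Qed.

End AdaBelief.

Theorem corollary2p1 (R : realType) (d T : nat) (F : set 'rV[R]_d)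
    (Dinf Ginf alpha beta1 beta2 lambda c eps : R)
    (f : nat -> 'rV[R]_d -> R) (theta m s : nat -> 'rV[R]_d)
    (thetastar : 'rV[R]_d) :
  (0 < T)%N ->
  convex_set F ->
  (forall x y, F x -> F y -> linf (x - y) <= Dinf) ->
  (forall t, (1 <= t <= T)%N ->
     convex_function setT (f t) /\ (forall x, differentiable (f t) x)) ->
  F thetastar ->
  (forall x, F x ->
     \sum_(1 <= t < T.+1) f t thetastar <= \sum_(1 <= t < T.+1) f t x) ->
  0 <= beta2 < 1 -> 0 <= beta1 < 1 -> 0 < alpha -> 0 < lambda < 1 ->
  0 <= eps ->
  F (theta 1%N) -> m 0%N = 0 -> s 0%N = 0 ->
  (forall t, (1 <= t <= T)%N ->
     m t = (beta1 * lambda ^+ t) *: m t.-1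
           + (1 - beta1 * lambda ^+ t) *: grad (f t) (theta t)) ->
  (forall t, (1 <= t <= T)%N ->
     s t = beta2 *: s t.-1 + (1 - beta2) *: sqv (grad (f t) (theta t) - m t)
           + const_mx eps) ->
  (forall t, (1 <= t <= T)%N ->
     let y := theta t - (alpha / Num.sqrt t%:R) *: invsqrt_mul (s t) (m t) in
     F (theta t.+1) /\
     (forall x, F x -> wnorm (s t) (theta t.+1 - y) <= wnorm (s t) (x - y))) ->
  (forall t, (1 <= t <= T)%N -> forall i, s t ord0 i <= s t.+1 ord0 i) ->
  (forall t, (1 <= t <= T)%N -> linf (grad (f t) (theta t)) <= Ginf / 2) ->
  0 < c ->
  (forall t, (1 <= t <= T)%N -> forall i, c <= s t ord0 i) ->
  \sum_(1 <= t < T.+1) (f t (theta t) - f t thetastar) <=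
    Dinf ^+ 2 * Num.sqrt T%:R / (2 * alpha * (1 - beta1))
      * \sum_(i < d) Num.sqrt (s T ord0 i)
  + (1 + beta1) * alpha * Num.sqrt (1 + ln T%:R)
      / (2 * Num.sqrt c * (1 - beta1) ^+ 3)
      * \sum_(i < d)
          Num.sqrt (\sum_(1 <= t < T.+1) ((grad (f t) (theta t)) ord0 i ^+ 2) ^+ 2)
  + Dinf ^+ 2 * beta1 * Ginf / (2 * (1 - beta1) * (1 - lambda) ^+ 2 * alpha).
Proof.
move=> T_gt0 F_convex F_diam f_convex F_thetastar _ _ /andP[beta1_ge0 beta1_lt1] alpha_gt0
  /andP[lambda_gt0 lambda_lt1] _ F_theta1 m0 _ m_rec _ theta_proj s_incr g_bound c_gt0 s_ge_c.
have Ginf_ge0 : 0 <= Ginf.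
  have := le_trans (bigmax_ge_id _ _ _ _) (g_bound 1%N T_gt0); lra.
apply: le_trans (adabelief_regret_le T_gt0 F_convex F_diam f_convex F_thetastar beta1_ge0
  beta1_lt1 alpha_gt0 (ltW lambda_gt0) (ltW lambda_lt1) F_theta1 m0 m_rec theta_proj s_incr
  c_gt0 s_ge_c) _.
rewrite -addrA lerD2l -[leLHS]addr0 lerD //; last first.
  apply: divr_ge0; first exact: mulr_ge0 (mulr_ge0 (sqr_ge0 _) beta1_ge0) Ginf_ge0.
  by rewrite !mulr_ge0 ?subr_ge0 ?ltW.
have beta1_neq1 : 1 - beta1 != 0 by rewrite gt_eqF // subr_gt0.
have sqrtc_neq0 : Num.sqrt c != 0 by rewrite gt_eqF // sqrtr_gt0.
rewrite (_ : (1 + beta1) * _ * _ / _ * _ = (1 + beta1) / (2 * (1 - beta1) ^+ 3)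
  * (alpha * Num.sqrt (1 + ln T%:R) / Num.sqrt c
     * \sum_(i < d) Num.sqrt (\sum_(1 <= t < T.+1) (grad (f t) (theta t) ord0 i ^+ 2) ^+ 2)));
  last by field; rewrite beta1_neq1 sqrtc_neq0.
apply: ler_wpM2r; last by rewrite momentum_coef_le // beta1_ge0.
apply: mulr_ge0; last by apply: sumr_ge0 => i _; exact: sqrtr_ge0.
by rewrite !mulr_ge0 ?invr_ge0 ?sqrtr_ge0 ?ltW.
Qed.
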